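(* For every integer $n\ge 0$, \[ B_{n,q}=\sum_{k=0}^{n}(-1)^k2^{n-2k}k!\,S_2(n,k)\,d_{k,q}. \]
   Context: Let $p$ be a fixed odd prime, $\mathbb{C}_p$ the completion of the algebraic closure of $\mathbb{Q}_p$, with $|p|_p=1/p$. Let $q\in\mathbb{C}_p$ with $|1-q|_p<p^{-1/(p-1)}$, and $\log$ the $p$-adic logarithm. The $q$-Bernoulli numbers $B_{n,q}$ are defined by $\frac{(q-1)+\frac{q-1}{\log q}t}{qe^t-1}=\sum_{n\ge0}B_{n,q}\frac{t^n}{n!}$. The numbers $d_{n,q}$ are defined by \[ \frac{q-1+\frac{q-1}{\log q}\cdot\frac12\log(1-4t)}{q\sqrt{1-4t}-1}=\sum_{n=0}^{\infty}d_{n,q}t^n, \] for $t\in\mathbb{C}_p$ with $|t|_p<p^{-1/(p-1)}$. $S_2(n,k)$ are the Stirling numbers of the second kind, defined by $x^n=\sum_{l=0}^n S_2(n,l)(x)_l$, where $(x)_0=1$, $(x)_l=x(x-1)\cdots(x-l+1)$. *)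

(* Formal power series over an abstract field K of
   characteristic 0 are represented by their coefficient sequences nat -> K. *)
From HB Require Import structures.
From mathcomp Require Import all_boot all_order all_algebra.
Set Implicit Arguments. Unset Strict Implicit. Unset Printing Implicit Defensive.
Import GRing.Theory.
Local Open Scope ring_scope.

(* Stirling numbers of the second kind, by the standard recursion
   S2(n+1,k+1) = (k+1) S2(n,k+1) + S2(n,k), S2(0,0)=1, S2(n+1,0)=S2(0,k+1)=0;
   these are exactly the numbers with x^n = sum_l S2(n,l) (x)_l. *)
Fixpoint stirling2 (n k : nat) : nat :=
  match n, k with
  | 0, 0 => 1
  | 0, _.+1 => 0
  | _.+1, 0 => 0
  | n'.+1, k'.+1 => k'.+1 * stirling2 n' k'.+1 + stirling2 n' k'
  end%N.

Section FPS.
Variable K : fieldType.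

Definition fps_mul (a b : nat -> K) (n : nat) : K :=
  \sum_(k < n.+1) a k * b (n - k)%N.
Definition fps_add (a b : nat -> K) (n : nat) : K := a n + b n.
Definition fps_scale (c : K) (a : nat -> K) (n : nat) : K := c * a n.
Definition fps_C (c : K) (n : nat) : K := if n == 0%N then c else 0.
Definition fps_X (n : nat) : K := if n == 1%N then 1 else 0.
Definition fps_exp (n : nat) : K := (n`!%:R)^-1.
Definition gbinom (a : K) (m : nat) : K :=
  (\prod_(i < m) (a - i%:R)) / m`!%:R.
(* sqrt(1-4t) = sum_m binom(1/2, m) (-4t)^m  (the branch with value 1 at 0) *)
Definition fps_sqrt1m4 (n : nat) : K := gbinom (2%:R)^-1 n * (- 4%:R) ^+ n.
Definition fps_log1m4 (n : nat) : K :=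
  if n == 0%N then 0 else - ((4%:R) ^+ n / n%:R).
Definition egf (b : nat -> K) (n : nat) : K := b n / n`!%:R.

(* B is the sequence of q-Bernoulli numbers (lq stands for log q):
   (q e^t - 1) * sum_n B_n t^n/n! = (q-1) + (q-1)/log q * t *)
Definition is_qBernoulli (q lq : K) (B : nat -> K) : Prop :=
  forall n, fps_mul (fps_add (fps_scale q fps_exp) (fps_C (-1))) (egf B) n
            = fps_add (fps_C (q - 1)) (fps_scale ((q - 1) / lq) fps_X) n.

Definition is_dq (q lq : K) (d : nat -> K) : Prop :=
  forall n, fps_mul (fps_add (fps_scale q fps_sqrt1m4) (fps_C (-1))) d n
            = fps_add (fps_C (q - 1))
                      (fps_scale ((q - 1) / lq * (2%:R)^-1) fps_log1m4) n.

End FPS.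

From HB Require Import structures.
From mathcomp Require Import all_boot all_order all_algebra.
From mathcomp Require Import ring.
Import GRing.Theory.
Local Open Scope ring_scope.

(* Substitute t = (1 - e^(2s))/4 in the generating function D(t) = sum_k d_k t^k.
   Then sqrt(1 - 4t) = e^s and log(1 - 4t)/2 = s, so the relation defining d
   turns into the one defining the q-Bernoulli numbers, and D((1 - e^(2s))/4)
   is their exponential generating function.  On the other hand
   ((1 - e^(2s))/4)^k = (-1/4)^k (e^(2s) - 1)^k, whose n-th exponential
   coefficient is (-1/4)^k k! S_2(n,k) 2^n.  Power series are handled as
   polynomials compared modulo X^N; the identities for sqrt and log follow from
   the differential equations (1 - 4t) y' = -2y and (1 - 4t) y' = -4, whose
   solutions are determined by y(0) in characteristic 0. *)

Lemma expfz_subn_double (F : fieldType) (x : F) (n k : nat) : x != 0 ->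
  x ^ (n%:Z - (2 * k)%:Z) = (x ^+ 2)^-1 ^+ k * x ^+ n.
Proof. by move=> x_neq0; rewrite expfzDr // -exprnN exprM exprVn mulrC. Qed.

Section TruncatedCongruence.
Context {K : fieldType}.
Implicit Types (p q r A U : {poly K}) (a : K).

Definition eqmodX (N : nat) (p q : {poly K}) :=
  forall i, (i < N)%N -> p`_i = q`_i.

Lemma eqmodX_dvdp N p q : eqmodX N p q <-> 'X^N %| p - q.
Proof.
split=> [eq_pq | /dvdpP [r pq_r] i lt_iN].
- apply/modp_eq0P; rewrite -Pdiv.IdomainMonic.take_poly_modp.
  apply/polyP => i; rewrite coef_take_poly coef0 coefB.
  by case: ifP => // /eq_pq ->; rewrite subrr.
- by apply/eqP; rewrite -subr_eq0 -coefB pq_r coefMXn lt_iN.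
Qed.

Lemma eqmodX_sym {N p q} : eqmodX N p q -> eqmodX N q p.
Proof. by move=> eq_pq i /eq_pq ->. Qed.

Lemma eqmodX_trans {N p q r} : eqmodX N p q -> eqmodX N q r -> eqmodX N p r.
Proof. by move=> eq_pq eq_qr i lt_iN; rewrite eq_pq // eq_qr. Qed.

Lemma eqmodXDl {N} r {p q} : eqmodX N p q -> eqmodX N (r + p) (r + q).
Proof. by move=> eq_pq i lt_iN; rewrite !coefD eq_pq. Qed.

Lemma eqmodXDr {N} r {p q} : eqmodX N p q -> eqmodX N (p + r) (q + r).
Proof. by move=> eq_pq i lt_iN; rewrite !coefD eq_pq. Qed.

Lemma eqmodXZ {N} a {p q} : eqmodX N p q -> eqmodX N (a *: p) (a *: q).
Proof. by move=> eq_pq i lt_iN; rewrite !coefZ eq_pq. Qed.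

Lemma eqmodXMl {N} r {p q} : eqmodX N p q -> eqmodX N (r * p) (r * q).
Proof.
by move=> /eqmodX_dvdp ?; apply/eqmodX_dvdp; rewrite -mulrBr dvdp_mull.
Qed.

Lemma eqmodXMr {N} r {p q} : eqmodX N p q -> eqmodX N (p * r) (q * r).
Proof. by rewrite ![_ * r]mulrC; apply: eqmodXMl. Qed.

Lemma coef0_comp p U : U`_0 = 0 -> (p \Po U)`_0 = p`_0.
Proof.
by move=> U0; rewrite -horner_coef0 horner_comp horner_coef0 U0 horner_coef0.
Qed.

Lemma eqmodX_comp {N U p q} :
  U`_0 = 0 -> eqmodX N p q -> eqmodX N (p \Po U) (q \Po U).
Proof.
move=> U0 /eqmodX_dvdp /dvdpP [r pq_r]; apply/eqmodX_dvdp.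
have /eqmodX_dvdp : eqmodX 1 U 0 by case=> // _; rewrite coef0.
rewrite expr1 subr0 => /dvdpP [s ->].
rewrite -comp_polyB pq_r comp_polyM comp_Xn_poly exprMn.
by apply/dvdp_mull/dvdp_mull.
Qed.

Lemma eqmodX_mull_cancel {N} A {p q} :
  A`_0 != 0 -> eqmodX N (A * p) (A * q) -> eqmodX N p q.
Proof.
move=> A0 /eqmodX_dvdp; rewrite -mulrBr Gauss_dvdpr => [/eqmodX_dvdp //|].
by apply: coprimep_expl; rewrite coprimep_sym coprimepX rootE horner_coef0.
Qed.

End TruncatedCongruence.

Section SeriesInCharacteristicZero.
Context {K : fieldType}.
Implicit Types (p r f : {poly K}) (a : K).

Lemma coefM_fps_mul N p r (a b : nat -> K) i :
  (forall j, (j < N)%N -> p`_j = a j) -> (forall j, (j < N)%N -> r`_j = b j) ->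
  (i < N)%N -> (p * r)`_i = fps_mul a b i.
Proof.
move=> pa rb lt_iN; rewrite coefM.
apply: eq_bigr => [[j /=]]; rewrite ltnS => le_ji _.
rewrite pa ?rb //; first exact: leq_ltn_trans (leq_subr _ _) lt_iN.
exact: leq_ltn_trans le_ji lt_iN.
Qed.

Hypothesis charK0 : [pchar K] =i pred0.

Lemma natrS_neq0 m : m.+1%:R != 0 :> K.
Proof. by have /pcharf0P -> := charK0. Qed.

Lemma fact_neq0 m : m`!%:R != 0 :> K.
Proof. by have /pcharf0P -> := charK0; rewrite -lt0n fact_gt0. Qed.

Lemma eqmodX_deriv_uniq N a r p q :
  eqmodX N p^`() (a *: p + r) -> eqmodX N q^`() (a *: q + r) -> p`_0 = q`_0 ->
  eqmodX N.+1 p q.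
Proof.
move=> dp dq pq0; elim=> [//|i IHi] lt_iN.
apply: (mulIf (natrS_neq0 i)); rewrite !mulr_natr -!coef_deriv.
by rewrite dp ?dq // !coefD !coefZ IHi // ltnW.
Qed.

Definition exp_poly N a : {poly K} := \poly_(i < N) (a ^+ i / i`!%:R).

Lemma exp_poly_coef0 N a : (exp_poly N.+1 a)`_0 = 1.
Proof. by rewrite coef_poly /= expr0 fact0 divr1. Qed.

Lemma deriv_exp_poly N a : eqmodX N (exp_poly N.+1 a)^`() (a *: exp_poly N.+1 a).
Proof.
move=> i lt_iN; rewrite coef_deriv coefZ !coef_poly ltnS lt_iN ltnW //.
rewrite factS natrM exprS -mulr_natr.
by field; rewrite fact_neq0 addrC natr1 natrS_neq0.
Qed.

Section StirlingCoefficients.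
Variables (N : nat) (a : K).
Local Notation F := (exp_poly N a - 1).

Lemma coef_exp_poly_sub1XS n k : (n.+1 < N)%N ->
  (F ^+ k.+1)`_n.+1 * n.+1%:R = a * k.+1%:R * ((F ^+ k.+1)`_n + (F ^+ k)`_n).
Proof.
move=> lt_n1N; have dF : eqmodX n.+1 F^`() (a *: (F + 1)).
  rewrite derivB -polyC1 derivC subr0 subrK.
  case: N lt_n1N => // N' lt_n1N i lt_in1.
  by apply: deriv_exp_poly; apply: leq_trans lt_in1 _; rewrite -ltnS.
rewrite mulr_natr -coef_deriv deriv_exp coefMn /=.
rewrite (eqmodXMr (F ^+ k) dF) //.
by rewrite -scalerAl mulrDl mul1r -exprS coefZ coefD -mulrnAl mulr_natr.
Qed.

Lemma coef_exp_poly_sub1X n k : (n < N)%N ->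
  (F ^+ k)`_n * n`!%:R = k`!%:R * (stirling2 n k)%:R * a ^+ n.
Proof.
elim: n k => [|n IHn] [|k] lt_nN.
- by rewrite expr0 coef1 /= !mul1r.
- by rewrite -horner_coef0 horner_exp !hornerE horner_coef0 coef_poly lt_nN
    expr0 divr1 subrr expr0n.
- by rewrite expr0 coef1 /= mulr0n !(mul0r, mulr0).
rewrite factS natrM mulrA coef_exp_poly_sub1XS // mulrDr mulrDl.
rewrite -!mulrA !IHn ?(ltnW lt_nN) // factS /= !natrD !natrM exprS.
ring.
Qed.

End StirlingCoefficients.

Definition sqrt1m4_poly N : {poly K} := \poly_(i < N) fps_sqrt1m4 K i.
Definition log1m4_poly N : {poly K} := \poly_(i < N) fps_log1m4 K i.

Lemma fps_sqrt1m4_0 : fps_sqrt1m4 K 0 = 1.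
Proof. by rewrite /fps_sqrt1m4 /gbinom big_ord0 expr0 fact0 divr1 mulr1. Qed.

Lemma fps_sqrt1m4S i :
  fps_sqrt1m4 K i.+1 *+ i.+1 = fps_sqrt1m4 K i * (4%:R * i%:R - 2%:R).
Proof.
rewrite -mulr_natr /fps_sqrt1m4 /gbinom big_ord_recr /= factS natrM exprS.
by field; rewrite fact_neq0 addrC natr1 !natrS_neq0.
Qed.

Lemma fps_log1m4S i : fps_log1m4 K i.+1 *+ i.+1 = - 4%:R ^+ i.+1.
Proof.
have -> : fps_log1m4 K i.+1 = - (4%:R ^+ i.+1 / i.+1%:R) by [].
by rewrite mulNrn -[(_ / _) *+ _]mulr_natr divfK ?natrS_neq0.
Qed.

Lemma coef_one_sub4XM p i :
  ((1 - 4%:R *: 'X) * p)`_i = p`_i - 4%:R * (if i is i'.+1 then p`_i' else 0).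
Proof. by rewrite mulrBl mul1r -scalerAl coefB coefZ coefXM; case: i. Qed.

Lemma sqrt1m4_poly_ode N :
  eqmodX N ((1 - 4%:R *: 'X) * (sqrt1m4_poly N.+1)^`())
           (- 2%:R *: sqrt1m4_poly N.+1).
Proof.
move=> i lt_iN; rewrite coef_one_sub4XM coefZ.
case: i lt_iN => [|i] lt_iN;
  rewrite !coef_deriv !coef_poly ?ltnS lt_iN ?(ltnW lt_iN);
  by rewrite fps_sqrt1m4S; ring.
Qed.

Lemma log1m4_poly_ode N :
  eqmodX N ((1 - 4%:R *: 'X) * (log1m4_poly N.+1)^`()) (- 4%:R)%:P.
Proof.
move=> i lt_iN; rewrite coef_one_sub4XM coefC.
case: i lt_iN => [|i] lt_iN;
  rewrite !coef_deriv !coef_poly ?ltnS lt_iN ?(ltnW lt_iN);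
  by rewrite !fps_log1m4S exprS /=; ring.
Qed.

Definition tsubst N : {poly K} := 4%:R^-1 *: (1 - exp_poly N 2%:R).

Lemma tsubst_coef0 N : (tsubst N.+1)`_0 = 0.
Proof. by rewrite coefZ coefB coef1 exp_poly_coef0 subrr mulr0. Qed.

Lemma one_sub4_tsubst N : 1 - 4%:R *: tsubst N = exp_poly N 2%:R.
Proof. by rewrite scalerA mulfV ?natrS_neq0 // scale1r opprB addrC subrK. Qed.

Lemma deriv_tsubst N :
  eqmodX N (tsubst N.+1)^`() (- 2%:R^-1 *: exp_poly N.+1 2%:R).
Proof.
move=> i lt_iN; rewrite derivZ derivB -polyC1 derivC sub0r coefZ coefN.
rewrite deriv_exp_poly // !coefZ.
by field; rewrite !natrS_neq0.
Qed.

Lemma deriv_comp_tsubst {N p f} :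
  eqmodX N ((1 - 4%:R *: 'X) * p^`()) f ->
  eqmodX N (p \Po tsubst N.+1)^`() (- 2%:R^-1 *: (f \Po tsubst N.+1)).
Proof.
move=> ode_p; rewrite deriv_comp.
apply: eqmodX_trans (eqmodXMl _ (deriv_tsubst N)) _.
rewrite mulrC -scalerAl; apply: eqmodXZ.
have := eqmodX_comp (tsubst_coef0 N) ode_p.
rewrite comp_polyM comp_polyB comp_polyZ comp_polyX.
by rewrite -polyC1 comp_polyC one_sub4_tsubst.
Qed.

Lemma sqrt1m4_comp_tsubst N :
  eqmodX N.+1 (sqrt1m4_poly N.+1 \Po tsubst N.+1) (exp_poly N.+1 1).
Proof.
apply: (@eqmodX_deriv_uniq N 1 0).
- rewrite addr0 scale1r.
  apply: eqmodX_trans (deriv_comp_tsubst (sqrt1m4_poly_ode N)) _.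
  by rewrite comp_polyZ scalerA mulrN mulNr mulVf ?natrS_neq0 // opprK scale1r.
- by move=> i lt_iN; rewrite addr0 deriv_exp_poly.
- by rewrite coef0_comp ?tsubst_coef0 // exp_poly_coef0 coef_poly fps_sqrt1m4_0.
Qed.

Lemma log1m4_comp_tsubst N :
  eqmodX N.+1 (log1m4_poly N.+1 \Po tsubst N.+1) (2%:R *: 'X).
Proof.
apply: (@eqmodX_deriv_uniq N 0 2%:R%:P).
- rewrite scale0r add0r.
  apply: eqmodX_trans (deriv_comp_tsubst (log1m4_poly_ode N)) _.
  rewrite comp_polyC scale_polyC (_ : - 2%:R^-1 * - 4%:R = 2%:R) //.
  by field; rewrite natrS_neq0.
- by rewrite scale0r add0r derivZ derivX scale_polyC mulr1.
- by rewrite coef0_comp ?tsubst_coef0 // coef_poly coefZ coefX mulr0.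
Qed.

Lemma qBernoulli_eqmodX N {q lq : K} {B : nat -> K} : is_qBernoulli q lq B ->
  eqmodX N ((q *: exp_poly N 1 - 1) * \poly_(i < N) egf B i)
           ((q - 1)%:P + ((q - 1) / lq) *: 'X).
Proof.
move=> qB i lt_iN.
pose E := fps_add (fps_scale q (fps_exp K)) (fps_C (-1)).
rewrite (@coefM_fps_mul N _ _ E (egf B)) //.
- rewrite qB coefD coefC coefZ coefX /fps_add /fps_C /fps_scale /fps_X.
  by case: (i == 1%N).
- move=> j lt_jN; rewrite coefB coefZ coef1 coef_poly lt_jN expr1n mul1r.
  rewrite /E /fps_add /fps_scale /fps_C /fps_exp.
  by case: (j == 0%N); rewrite ?subr0 ?addr0.
- by move=> j lt_jN; rewrite coef_poly lt_jN.
Qed.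

Lemma dq_eqmodX N {q lq : K} {d : nat -> K} : is_dq q lq d ->
  eqmodX N ((q *: sqrt1m4_poly N - 1) * \poly_(i < N) d i)
           ((q - 1)%:P + ((q - 1) / lq * 2%:R^-1) *: log1m4_poly N).
Proof.
move=> qd i lt_iN.
pose S := fps_add (fps_scale q (fps_sqrt1m4 K)) (fps_C (-1)).
rewrite (@coefM_fps_mul N _ _ S d) //.
- by rewrite qd coefD coefC coefZ coef_poly lt_iN.
- move=> j lt_jN; rewrite coefB coefZ coef1 coef_poly lt_jN.
  by rewrite /S /fps_add /fps_scale /fps_C; case: (j == 0%N); rewrite ?subr0 ?addr0.
- by move=> j lt_jN; rewrite coef_poly lt_jN.
Qed.

Lemma coef_comp_tsubst (d : nat -> K) {N n} : (n <= N)%N ->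
  (\poly_(i < N.+1) d i \Po tsubst N.+1)`_n * n`!%:R
  = \sum_(k < N.+1)
      d k * (- 4%:R^-1) ^+ k * k`!%:R * (stirling2 n k)%:R * 2%:R ^+ n.
Proof.
move=> le_nN; rewrite poly_def (raddf_sum (comp_poly _)) coef_sum mulr_suml.
apply: eq_bigr => k _.
have -> : tsubst N.+1 = - 4%:R^-1 *: (exp_poly N.+1 2%:R - 1).
  by rewrite scaleNr -scalerN opprB.
rewrite /= comp_polyZ comp_Xn_poly exprZn !coefZ -!mulrA coef_exp_poly_sub1X //.
by rewrite !mulrA.
Qed.

Lemma dq_comp_tsubst {q lq : K} {B d : nat -> K} {N} :
  q != 1 -> is_qBernoulli q lq B -> is_dq q lq d ->
  eqmodX N.+1 (\poly_(i < N.+1) d i \Po tsubst N.+1) (\poly_(i < N.+1) egf B i).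
Proof.
move=> q_neq1 qB qd; set E := q *: exp_poly N.+1 1 - 1.
have dqU := eqmodX_comp (tsubst_coef0 N) (dq_eqmodX N.+1 qd).
rewrite comp_polyM comp_polyB comp_polyZ -polyC1 comp_polyC polyC1 in dqU.
rewrite comp_polyD comp_polyC comp_polyZ in dqU.
apply: (eqmodX_mull_cancel E).
  by rewrite coefB coefZ exp_poly_coef0 coef1 mulr1 subr_eq0.
have sqrtU := eqmodX_sym (sqrt1m4_comp_tsubst N).
apply: eqmodX_trans (eqmodXMr _ (eqmodXDr _ (eqmodXZ q sqrtU))) _.
apply: eqmodX_trans dqU _.
apply: eqmodX_trans (eqmodXDl _ (eqmodXZ _ (log1m4_comp_tsubst N))) _.
rewrite scalerA divfK ?natrS_neq0 //.
exact: eqmodX_sym (qBernoulli_eqmodX N.+1 qB).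
Qed.

End SeriesInCharacteristicZero.

Theorem theorem4 (K : fieldType) (q lq : K) (B d : nat -> K) :
  [pchar K] =i pred0 -> q != 1 -> lq != 0 ->
  is_qBernoulli q lq B -> is_dq q lq d ->
  forall n : nat,
    B n = \sum_(k < n.+1)
            (-1) ^+ k * (2%:R : K) ^ (n%:Z - (2 * k)%:Z) * k`!%:R
            * (stirling2 n k)%:R * d k.
Proof.
move=> charK0 q_neq1 _ qB qd n.
have := coef_comp_tsubst charK0 d (leqnn n).
rewrite (dq_comp_tsubst charK0 q_neq1 qB qd n (ltnSn n)) coef_poly ltnSn.
rewrite /egf divfK ?fact_neq0 // => ->.
apply: eq_bigr => k _.
have sq2 : (2%:R : K) ^+ 2 = 4%:R by rewrite -natrX.
rewrite expfz_subn_double ?natrS_neq0 // sq2 (exprNn 4%:R^-1).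
ring.
Qed.
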